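(* The semantics $\mathit{cf2}$ and $\mathit{stg2}$ satisfy the weak reinstatement criterion: for every argumentation framework $\mathcal{F}$ and every $S\in\mathit{cf2}(\mathcal{F})$ or $S\in\mathit{stg2}(\mathcal{F})$, $S$ contains the grounded extension of $\mathcal{F}$.
   Context: An argumentation framework (AF) is $\mathcal{F}=(A_{\mathcal{F}},R_{\mathcal{F}})$ with $R_{\mathcal{F}}\subseteq A_{\mathcal{F}}\times A_{\mathcal{F}}$ (possibly infinite); $a\rightarrow b$ means $(a,b)\in R_{\mathcal{F}}$. $S$ defends $a$ if every attacker of $a$ is attacked by some element of $S$; the grounded extension is the least fixed point of $S\mapsto\{x:S\text{ defends }x\}$. $\mathcal{F}|_B=(A_{\mathcal{F}}\cap B,R_{\mathcal{F}}\cap(B\times B))$. Conflict-free: no $a,b\in S$ with $a\rightarrow b$; naive: $\subseteq$-maximal conflict-free; $S^\oplus=S\cup\{x:\exists y\in S,\ y\rightarrow x\}$; stage: conflict-free $S$ with no conflict-free $T$ having $S^\oplus\subsetneq T^\oplus$. $\mathrm{SCC}(\mathcal{F})$: strongly connected components of the attack graph. $D_S(X)=\{b\in X:\exists a\in S\setminus X,\ a\rightarrow b\}$. $S\in\mathit{cf2}(\mathcal{F})$ iff either $|\mathrm{SCC}(\mathcal{F})|=1$ and $S$ is naive in $\mathcal{F}$, or $|\mathrm{SCC}(\mathcal{F})|\ne 1$ and for each $X\in\mathrm{SCC}(\mathcal{F})$, $S\cap X\in\mathit{cf2}(\mathcal{F}|_{X\setminus D_S(X)})$ (recursively). For infinite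 AFs the recursion may be ill-founded; $S$ is counted as a member of $\mathit{cf2}(\mathcal{F})$ only when the tree of recursive calls has no infinite branch and the condition holds at every leaf. $\mathit{stg2}$ is the same with stage in place of naive. *)

(* Possibly infinite argumentation frameworks over an
   arbitrary carrier type A; sets are predicates A -> Prop. *)
From Stdlib Require Import Relations.

Set Implicit Arguments.

Record AF (A : Type) := mkAF {
  args : A -> Prop;
  att  : A -> A -> Prop
}.
Arguments mkAF {A}.
Arguments args {A}.
Arguments att {A}.

Section AFDefs.
Variable A : Type.
Implicit Types (F : AF A) (S T X B : A -> Prop).

Definition wf_AF F : Prop := forall a b, att F a b -> args F a /\ args F b.

Definition subset S T : Prop := forall x, S x -> T x.
Definition set_eq S T : Prop := forall x, S x <-> T x.
Definition proper_subset S T : Prop := subset S T /\ ~ subset T S.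

Definition defends F S (a : A) : Prop :=
  forall b, att F b a -> exists c, S c /\ att F c b.

Definition charf F S : A -> Prop := fun x => args F x /\ defends F S x.

Definition grounded F G : Prop :=
  set_eq (charf F G) G /\
  (forall T, set_eq (charf F T) T -> subset G T).

Definition restrict F B : AF A :=
  mkAF (fun x => args F x /\ B x) (fun a b => att F a b /\ B a /\ B b).

Definition conflict_free F S : Prop :=
  subset S (args F) /\ forall a b, S a -> S b -> ~ att F a b.

Definition naive F S : Prop :=
  conflict_free F S /\
  forall T, conflict_free F T -> subset S T -> subset T S.

Definition range F S : A -> Prop :=
  fun x => S x \/ exists y, S y /\ att F y x.

Definition stage F S : Prop :=
  conflict_free F S /\
  ~ (exists T, conflict_free F T /\ proper_subset (range F S) (range F T)).

Definition reach F : A -> A -> Prop := clos_refl_trans A (att F).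

Definition is_scc F X : Prop :=
  exists a, args F a /\
    forall b, X b <-> (args F b /\ reach F a b /\ reach F b a).

Definition one_scc F : Prop :=
  exists X, is_scc F X /\ forall Y, is_scc F Y -> set_eq Y X.

Definition Dset F S X : A -> Prop :=
  fun b => X b /\ exists a, S a /\ ~ X a /\ att F a b.

(* Being an inductive
   predicate, membership requires a well-founded derivation tree
   (no infinite branch of recursive calls), with the base condition
   at every leaf. *)
Inductive scc_rec (base : AF A -> (A -> Prop) -> Prop)
  : AF A -> (A -> Prop) -> Prop :=
| scc_rec_base : forall F S,
    one_scc F -> base F S -> scc_rec base F S
| scc_rec_step : forall F S,
    ~ one_scc F ->
    subset S (args F) ->
    (forall X, is_scc F X ->
       scc_rec base (restrict F (fun x => X x /\ ~ Dset F S X x))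
                    (fun x => S x /\ X x)) ->
    scc_rec base F S.

Definition cf2 F S : Prop := scc_rec naive F S.
Definition stg2 F S : Prop := scc_rec stage F S.

End AFDefs.

From Stdlib Require Import Relations Classical.

(* Induction along the grounded extension G.  An argument x of G is defended
   by arguments already known to lie in S; since S is conflict-free, no member
   of S attacks x, so x is never removed by a set D_S(X) and survives every
   step of the SCC recursion down to a leaf.  In a leaf with a single SCC any
   other argument would reach x through an attacker of x, and the G-defender
   against that attacker would, by induction, be the only argument of the
   leaf.  So the leaf is the one-point framework {x}, x does not attack itself
   (G is conflict-free), and every naive or stage extension of {x} is {x}. *)

Set Implicit Arguments.
Unset Strict Implicit.

Section Grounded.
Variables (A : Type) (F : AF A).

Lemma defends_mono (T U : A -> Prop) x :
  subset T U -> defends F T x -> defends F U x.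
Proof.
  intros TU Tx b Hb. destruct (Tx b Hb) as [c [Tc Hcb]]. eauto.
Qed.

Lemma charf_mono (T U : A -> Prop) :
  subset T U -> subset (charf F T) (charf F U).
Proof.
  intros TU x [Hx Tx]. split; [exact Hx | exact (defends_mono TU Tx)].
Qed.

Variable G : A -> Prop.
Hypothesis HG : grounded F G.

Lemma grounded_args x : G x -> args F x.
Proof. intros Gx. exact (proj1 (proj2 (proj1 HG x) Gx)). Qed.

Lemma grounded_defends x : G x -> defends F G x.
Proof. intros Gx. exact (proj2 (proj2 (proj1 HG x) Gx)). Qed.

(* The intersection of all prefixed points is a fixed point, so it contains
   the least one. *)
Lemma grounded_sub_prefixed T : subset (charf F T) T -> subset G T.
Proof.
  intros HT.
  set (K := fun x => forall U, subset (charf F U) U -> U x).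
  assert (K_prefixed : subset (charf F K) K).
  { intros x Kx U HU. apply HU. refine (charf_mono _ Kx). intros y Ky. exact (Ky U HU). }
  assert (K_fixed : set_eq (charf F K) K).
  { intros x; split; [apply K_prefixed |]. intros Kx. exact (Kx _ (charf_mono K_prefixed)). }
  intros x Gx. exact (proj2 HG K K_fixed x Gx T HT).
Qed.

Lemma grounded_ind (P : A -> Prop) :
  (forall x, G x -> defends F (fun y => G y /\ P y) x -> P x) -> subset G P.
Proof.
  intros HP.
  assert (GP : subset G (fun y => G y /\ P y)).
  { apply grounded_sub_prefixed. intros x [Hx Hdef].
    assert (Gx : G x).
    { apply (proj1 HG x). split; [exact Hx |].
      refine (defends_mono _ Hdef). intros y [Gy _]. exact Gy. }
    split; [exact Gx | exact (HP x Gx Hdef)]. }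
  intros x Gx. exact (proj2 (GP x Gx)).
Qed.

Lemma grounded_conflict_free b x : G b -> G x -> ~ att F b x.
Proof.
  intros Gb Gx. revert x Gx b Gb.
  apply (grounded_ind (P := fun x => forall b, G b -> ~ att F b x)).
  intros x _ Hdef b Gb Hbx.
  destruct (Hdef b Hbx) as [c [[Gc Pc] Hcb]].
  destruct (grounded_defends Gb Hcb) as [d [Gd Hdc]].
  exact (Pc d Gd Hdc).
Qed.

End Grounded.

Section SCCs.
Variables (A : Type) (F : AF A).

Definition scc_of (x : A) : A -> Prop :=
  fun y => args F y /\ reach F x y /\ reach F y x.

Lemma scc_of_is_scc x : args F x -> is_scc F (scc_of x).
Proof. intros Hx. exists x. split; [exact Hx | reflexivity]. Qed.

Lemma scc_of_self x : args F x -> scc_of x x.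
Proof. intros Hx. split; [exact Hx | split; apply rt_refl]. Qed.

Lemma one_scc_reach x y : one_scc F -> args F x -> args F y -> reach F y x.
Proof.
  intros [X [_ HX]] Hx Hy.
  assert (Hxy : scc_of x y).
  { apply (HX _ (scc_of_is_scc Hx)), (HX _ (scc_of_is_scc Hy)), scc_of_self, Hy. }
  exact (proj2 (proj2 Hxy)).
Qed.

Lemma reach_attacker x y : reach F y x -> y <> x -> exists z, att F z x.
Proof.
  intros Hyx ne. apply clos_rt_rtn1 in Hyx.
  inversion Hyx as [| z ? Hzx]; [contradiction | eauto].
Qed.

Lemma one_scc_singleton x :
  one_scc F -> args F x ->
  (forall z, att F z x -> exists c, forall y, args F y -> y = c) ->
  forall y, args F y -> y = x.
Proof.
  intros Hone Hx Hatt y Hy.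
  destruct (classic (y = x)) as [yx | ne]; [exact yx | exfalso].
  destruct (reach_attacker (one_scc_reach Hone Hx Hy) ne) as [z Hzx].
  destruct (Hatt z Hzx) as [c Hc].
  apply ne. rewrite (Hc y Hy), (Hc x Hx). reflexivity.
Qed.

End SCCs.

Section SCCRecursion.
Variables (A : Type) (base : AF A -> (A -> Prop) -> Prop).
Hypothesis base_conflict_free : forall F S, base F S -> conflict_free F S.

Lemma scc_rec_conflict_free F S : scc_rec base F S -> conflict_free F S.
Proof.
  induction 1 as [F S _ Hbase | F S _ Hsub _ IH]; [exact (base_conflict_free Hbase) |].
  split; [exact Hsub |]. intros a b Sa Sb Hab.
  set (X := scc_of F b).
  destruct (IH X (scc_of_is_scc (Hsub b Sb))) as [Hsub' Hcf'].
  assert (Xb : X b) by exact (scc_of_self (Hsub b Sb)).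
  destruct (Hsub' b (conj Sb Xb)) as [_ [_ nDb]].
  destruct (classic (X a)) as [Xa | nXa].
  - destruct (Hsub' a (conj Sa Xa)) as [_ [_ nDa]].
    exact (Hcf' a b (conj Sa Xa) (conj Sb Xb) (conj Hab (conj (conj Xa nDa) (conj Xb nDb)))).
  - apply nDb. split; [exact Xb |]. exists a. auto.
Qed.

(* Invariant of every recursive call (F', S') made while checking
   [scc_rec base F S]; the last field holds because an attack from S into an
   SCC X from outside X puts its target into D_S(X). *)
Record descendant (F : AF A) (S : A -> Prop) (F' : AF A) (S' : A -> Prop) : Prop := {
  desc_att : forall a b, att F' a b <-> att F a b /\ args F' a /\ args F' b;
  desc_sub : subset S' S;
  desc_restrict : forall a, S a -> args F' a -> S' a;
  desc_attacker_closed : forall c z, S c -> att F c z -> args F' z -> args F' c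
}.

Lemma descendant_refl F S : wf_AF F -> subset S (args F) -> descendant F S F S.
Proof.
  intros Hwf HS. split.
  - intros a b. split; [intros Hab; split; [exact Hab | exact (Hwf a b Hab)] | tauto].
  - intros a Sa. exact Sa.
  - intros a Sa _. exact Sa.
  - intros c z _ Hcz _. exact (proj1 (Hwf c z Hcz)).
Qed.

Lemma descendant_step F S F' S' X :
  (forall a b, S a -> S b -> ~ att F a b) ->
  descendant F S F' S' ->
  descendant F S (restrict F' (fun x => X x /\ ~ Dset F' S' X x)) (fun x => S' x /\ X x).
Proof.
  intros Scf [Hatt Hsub Hrestr Hclosed]. split.
  - intros a b. simpl. rewrite Hatt. tauto.
  - intros a [S'a _]. exact (Hsub a S'a).
  - intros a Sa [Ha [Xa _]]. exact (conj (Hrestr a Sa Ha) Xa).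
  - intros c z Sc Hcz [Hz [Xz nDz]].
    assert (Hc : args F' c) by exact (Hclosed c z Sc Hcz Hz).
    assert (Xc : X c).
    { apply NNPP. intros nXc. apply nDz. split; [exact Xz |].
      exists c. split; [exact (Hrestr c Sc Hc) |]. split; [exact nXc |].
      apply Hatt. auto. }
    split; [exact Hc |]. split; [exact Xc |].
    intros [_ [a [S'a [_ Hac]]]].
    exact (Scf a c (Hsub a S'a) Sc (proj1 (proj1 (Hatt a c) Hac))).
Qed.

Section Reinstatement.
Variables (F : AF A) (S : A -> Prop).
Hypothesis S_conflict_free : forall a b, S a -> S b -> ~ att F a b.

Lemma defended_not_Dset F' S' X x :
  descendant F S F' S' ->
  (forall z, att F z x -> exists c, S c /\ att F c z) ->
  ~ Dset F' S' X x.
Proof.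
  intros [Hatt Hsub _ _] Hdef [_ [a [S'a [_ Hax]]]].
  destruct (Hdef a (proj1 (proj1 (Hatt a x) Hax))) as [c [Sc Hca]].
  exact (S_conflict_free Sc (Hsub a S'a) Hca).
Qed.

Lemma leaf_singleton F' S' x :
  one_scc F' -> descendant F S F' S' -> args F' x ->
  (forall z, att F z x ->
     exists c, S c /\ att F c z /\ (args F' c -> forall y, args F' y -> y = c)) ->
  forall y, args F' y -> y = x.
Proof.
  intros Hone [Hatt _ _ Hclosed] Hx Hdef.
  apply (one_scc_singleton Hone Hx). intros z Hzx.
  destruct (proj1 (Hatt z x) Hzx) as [Hzx' [Hz _]].
  destruct (Hdef z Hzx') as [c [Sc [Hcz Hsing]]].
  exists c. exact (Hsing (Hclosed c z Sc Hcz Hz)).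
Qed.

End Reinstatement.

Hypothesis base_contains_singleton : forall F S x,
  base F S -> args F x -> (forall y, args F y -> y = x) -> ~ att F x x -> S x.

Theorem scc_rec_contains_grounded F G S :
  wf_AF F -> grounded F G -> scc_rec base F S -> subset G S.
Proof.
  intros Hwf HG HS.
  destruct (scc_rec_conflict_free HS) as [S_args Scf].
  pose proof (descendant_refl Hwf S_args) as Htop.
  set (accepted x := forall F' S', scc_rec base F' S' -> descendant F S F' S' ->
         args F' x -> S' x /\ (one_scc F' -> forall y, args F' y -> y = x)).
  enough (Hacc : subset G accepted).
  { intros x Gx. exact (proj1 (Hacc x Gx F S HS Htop (grounded_args HG Gx))). }
  apply (grounded_ind HG). intros x Gx Hdef F' S' HS'.
  assert (HdefS : forall z, att F z x ->
            exists c, S c /\ att F c z /\ accepted c).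
  { intros z Hzx. destruct (Hdef z Hzx) as [c [[Gc Pc] Hcz]].
    exists c. split; [exact (proj1 (Pc F S HS Htop (grounded_args HG Gc))) | auto]. }
  induction HS' as [F' S' Hone Hbase | F' S' Hnone _ _ IH]; intros Hdesc Hx.
  - assert (Hsing : forall y, args F' y -> y = x).
    { apply (leaf_singleton Hone Hdesc Hx). intros z Hzx.
      destruct (HdefS z Hzx) as [c [Sc [Hcz Pc]]].
      exists c. split; [exact Sc |]. split; [exact Hcz |].
      intros Hc. exact (proj2 (Pc F' S' (scc_rec_base _ _ Hone Hbase) Hdesc Hc) Hone). }
    split; [| intros _; exact Hsing].
    apply (base_contains_singleton Hbase Hx Hsing).
    intros Hxx. exact (grounded_conflict_free HG Gx Gx (proj1 (proj1 (desc_att Hdesc x x) Hxx))).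
  - split; [| intros Hone; contradiction].
    set (X := scc_of F' x).
    assert (nDx : ~ Dset F' S' X x).
    { apply (defended_not_Dset Scf Hdesc). intros z Hzx.
      destruct (HdefS z Hzx) as [c [Sc [Hcz _]]]. eauto. }
    refine (proj1 (proj1 (IH X (scc_of_is_scc Hx) (descendant_step X Scf Hdesc) _))).
    split; [exact Hx | split; [exact (scc_of_self Hx) | exact nDx]].
Qed.

End SCCRecursion.

Section BaseSemantics.
Variables (A : Type) (F : AF A) (x : A).
Hypotheses (Hx : args F x) (Hsing : forall y, args F y -> y = x) (Hxx : ~ att F x x).

Lemma conflict_free_singleton : conflict_free F (fun y => y = x).
Proof.
  split; [intros y -> ; exact Hx |]. intros a b -> ->. exact Hxx.
Qed.

Lemma naive_singleton S : naive F S -> S x.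
Proof.
  intros [[S_args _] Hmax].
  refine (Hmax _ conflict_free_singleton _ x eq_refl).
  intros y Sy. exact (Hsing (S_args y Sy)).
Qed.

Lemma stage_singleton S : stage F S -> S x.
Proof.
  intros [[S_args _] Hstage]. apply NNPP. intros nSx.
  assert (S_empty : forall y, ~ S y).
  { intros y Sy. apply nSx. rewrite <- (Hsing (S_args y Sy)). exact Sy. }
  apply Hstage. exists (fun y => y = x). split; [exact conflict_free_singleton |]. split.
  - intros y [Sy | [w [Sw _]]]; [destruct (S_empty y Sy) | destruct (S_empty w Sw)].
  - intros Hsub. destruct (Hsub x (or_introl eq_refl)) as [Sx | [w [Sw _]]].
    + exact (nSx Sx).
    + exact (S_empty w Sw).
Qed.

End BaseSemantics.

Theorem corollary1 (A : Type) (F : AF A) (G S : A -> Prop) :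
  wf_AF F ->
  grounded F G ->
  (cf2 F S \/ stg2 F S) ->
  subset G S.
Proof.
  intros Hwf HG [HS | HS].
  - refine (scc_rec_contains_grounded _ _ Hwf HG HS).
    + intros F' S' Hnaive. exact (proj1 Hnaive).
    + intros F' S' x Hnaive Hx Hsing Hxx. exact (naive_singleton Hx Hsing Hxx Hnaive).
  - refine (scc_rec_contains_grounded _ _ Hwf HG HS).
    + intros F' S' Hstage. exact (proj1 Hstage).
    + intros F' S' x Hstage Hx Hsing Hxx. exact (stage_singleton Hx Hsing Hxx Hstage).
Qed.
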